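(* Let $\mathbb{F}$ be an infinite field and $d\in\{1,2,3\}$. Then the set $S(d)$ is a minimal (with respect to inclusion) separating set for $R^{GL(2)}$.
   Context: Let $R=R_{2,d}=\mathbb{F}[x_{ij}(k)\mid 1\leq i,j\leq 2,\ 1\leq k\leq d]$ and let $X_k=(x_{ij}(k))$ be the $2\times 2$ generic matrices; $GL(2)$ acts by $g\cdot x_{ij}(k)=(g^{-1}X_kg)_{ij}$ and $R^{GL(2)}$ is the invariant algebra. Elements of $R$ are functions on $H=M(2)^{\oplus d}$ via $x_{ij}(k)(A_1,\dots,A_d)=(A_k)_{ij}$. Points $u,v\in H$ are separated by $S\subseteq R^{GL(2)}$ if $f(u)\neq f(v)$ for some $f\in S$, and separated if separated by $R^{GL(2)}$; $S$ is separating if every separated pair is separated by $S$. Here $S(d)$ consists of $\mathrm{tr}(X_i),\det(X_i)$ for $1\le i\le d$, $\mathrm{tr}(X_iX_j)$ for $1\le i<j\le d$, and $\mathrm{tr}(X_iX_jX_k)$ for $1\le i<j<k\le d$. *)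

From HB Require Import structures.
From mathcomp Require Import all_boot all_order all_algebra.
Set Implicit Arguments. Unset Strict Implicit. Unset Printing Implicit Defensive.
Import Order.TTheory GRing.Theory Num.Theory.
Local Open Scope ring_scope.

(* H = M(2)^{(+) d}: a point is a d-tuple of 2x2 matrices, indexed by 'I_d
   (index k in the paper corresponds to ordinal k-1). *)
Definition pt (F : fieldType) (d : nat) := 'I_d -> 'M[F]_2.

(* Elements of R = F[x_ij(k)] viewed as functions on H: the polynomial
   functions, i.e. the smallest class containing constants and the coordinate
   functions x_ij(k), closed under + and * (and pointwise equality). *)
Inductive polyfun (F : fieldType) (d : nat) : (pt F d -> F) -> Prop :=
| pf_const (c : F) : polyfun (fun _ => c)
| pf_coord (k : 'I_d) (i j : 'I_2) : polyfun (fun A => A k i j)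
| pf_add f g : polyfun f -> polyfun g -> polyfun (fun A => f A + g A)
| pf_mul f g : polyfun f -> polyfun g -> polyfun (fun A => f A * g A)
| pf_ext f g : polyfun f -> (forall A, f A = g A) -> polyfun g.

Definition conj_pt (F : fieldType) (d : nat) (g : 'M[F]_2) (A : pt F d) : pt F d :=
  fun k => invmx g *m A k *m g.

Definition invariant (F : fieldType) (d : nat) (f : pt F d -> F) : Prop :=
  polyfun f /\ forall g : 'M[F]_2, g \in unitmx -> forall A, f (conj_pt g A) = f A.

Definition separated_by (F : fieldType) (d : nat) (S : (pt F d -> F) -> Prop)
  (u v : pt F d) : Prop := exists f, S f /\ f u <> f v.

Definition separated (F : fieldType) (d : nat) (u v : pt F d) : Prop :=
  separated_by (@invariant F d) u v.

Definition separating (F : fieldType) (d : nat) (S : (pt F d -> F) -> Prop) : Prop :=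
  (forall f, S f -> invariant f) /\
  forall u v, separated u v -> separated_by S u v.

Definition minimal_separating (F : fieldType) (d : nat) (S : (pt F d -> F) -> Prop) : Prop :=
  separating S /\
  forall T : (pt F d -> F) -> Prop, (forall f, T f -> S f) -> separating T ->
    forall f, S f -> T f.

Definition Sd (F : fieldType) (d : nat) (f : pt F d -> F) : Prop :=
  (exists i : 'I_d, f = (fun A => \tr (A i))) \/
  (exists i : 'I_d, f = (fun A => \det (A i))) \/
  (exists i j : 'I_d, (i < j)%N /\ f = (fun A => \tr (A i *m A j))) \/
  (exists i j k : 'I_d, (i < j)%N /\ (j < k)%N /\
       f = (fun A => \tr (A i *m A j *m A k))).

Definition infinite_field (F : fieldType) : Prop :=
  forall s : seq F, exists x : F, x \notin s.

(* Equality on S(d) gives equality of the traces of all words of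
   length <= 3 in 1, X_1, ..., X_d and of all det X_k, hence of the trace and
   determinant of every L = a + sum_k c_k X_k and of traces of products of two
   or three such L.  If u and v share these data, every invariant agrees on
   them:
   - if some L(u) has two distinct eigenvalues in F, conjugate L(u) and L(v)
     to the same diagonal matrix; the data then fix the diagonal entries and
     the products of opposite off-diagonal entries of all coordinates, so u
     and v are conjugate by a diagonal matrix or are both triangular;
   - if some nonzero nilpotent L(u) has tr (L(u) X_l(u)) <> 0, conjugate L(u)
     and L(v) to E12; then u and v are conjugate by a unitriangular matrix;
   - otherwise every coordinate lies in F + F X_k for any nonscalar X_k, and
     u is conjugate either into F[C] for a companion matrix C without
     eigenvalues, where the data determine everything, or to an upper
     triangular point with scalar diagonal.
   A triangular point is not separated from its diagonal part: an invariant is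
   polynomial along its conjugates by diag(1, s), which tend to the diagonal
   part as s -> 0, and a polynomial is determined by its values at s <> 0 as F
   is infinite.  Each f in S(d) is the only element of S(d) separating an
   explicit pair of points supported on the indices of f; for tr (X_i X_j X_k)
   the pair is u and its coordinatewise transpose. *)

From HB Require Import structures.
From mathcomp Require Import all_boot all_order all_algebra.
From mathcomp Require Import ring zify.
From Stdlib Require Import FunctionalExtensionality Classical.
(* Imported after mathcomp, so that [invariant] is the one of Defs, not eqtype's. *)
From Pilot Require Import Defs.
Set Implicit Arguments. Unset Strict Implicit. Unset Printing Implicit Defensive.
Import Order.TTheory GRing.Theory Num.Theory.
Local Open Scope ring_scope.

Section Matrix2.
Variable R : comNzRingType.
Implicit Types A B C : 'M[R]_2.

Lemma ord2P (i : 'I_2) : i = 0 \/ i = 1.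
Proof. by case: i => [[|[|]]] //= ?; [left | right]; apply: val_inj. Qed.

Let ord0_2 : ord0 = 0 :> 'I_2. Proof. exact: val_inj. Qed.
Let lift0_2 : lift ord0 ord0 = 1 :> 'I_2. Proof. exact: val_inj. Qed.

Lemma mulmx2E A B i j : (A *m B) i j = A i 0 * B 0 j + A i 1 * B 1 j.
Proof. by rewrite !mxE !big_ord_recl big_ord0 addr0 ord0_2 lift0_2. Qed.

Lemma mxtrace2E A : \tr A = A 0 0 + A 1 1.
Proof. by rewrite /mxtrace !big_ord_recl big_ord0 addr0 ord0_2 lift0_2. Qed.

Lemma det2E A : \det A = A 0 0 * A 1 1 - A 0 1 * A 1 0.
Proof.
rewrite (expand_det_row A 0) !big_ord_recl big_ord0 addr0 /cofactor !det_mx11 !mxE.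
have -> : lift 0 (0 : 'I_1) = 1 :> 'I_2 by apply: val_inj.
have -> : lift 1 (0 : 'I_1) = 0 :> 'I_2 by apply: val_inj.
by rewrite /= expr0 expr1 !mul1r mulN1r mulrN.
Qed.

Definition mx2 (a b c e : R) : 'M[R]_2 :=
  \matrix_(i, j) if i == 0 then (if j == 0 then a else b) else (if j == 0 then c else e).

Lemma mx2E00 a b c e : mx2 a b c e 0 0 = a. Proof. by rewrite mxE. Qed.
Lemma mx2E01 a b c e : mx2 a b c e 0 1 = b. Proof. by rewrite mxE. Qed.
Lemma mx2E10 a b c e : mx2 a b c e 1 0 = c. Proof. by rewrite mxE. Qed.
Lemma mx2E11 a b c e : mx2 a b c e 1 1 = e. Proof. by rewrite mxE. Qed.

Lemma scalar_mx2E a : a%:M = mx2 a 0 0 a :> 'M[R]_2.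
Proof.
by apply/matrixP => i j; rewrite !mxE; case: (ord2P i) => ->; case: (ord2P j) => ->.
Qed.

Lemma scalar_comb2E a b A :
  a%:M + b *: A = mx2 (a + b * A 0 0) (b * A 0 1) (b * A 1 0) (a + b * A 1 1).
Proof.
apply/matrixP => i j; rewrite !mxE.
by case: (ord2P i) => ->; case: (ord2P j) => ->; rewrite /= ?mulr1n ?mulr0n ?add0r.
Qed.

Lemma eq_mx2 A B :
  A 0 0 = B 0 0 -> A 0 1 = B 0 1 -> A 1 0 = B 1 0 -> A 1 1 = B 1 1 -> A = B.
Proof.
by move=> *; apply/matrixP => i j; case: (ord2P i) => ->; case: (ord2P j) => ->.
Qed.

Lemma trmx_mx2 a b c e : (mx2 a b c e)^T = mx2 a c b e.
Proof.
by apply/matrixP => i j; rewrite !mxE; case: (ord2P i) => ->; case: (ord2P j) => ->.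
Qed.

Lemma mxtrace_rot A B C : \tr (A *m B *m C) = \tr (B *m C *m A).
Proof. by rewrite -mulmxA mxtrace_mulC. Qed.

End Matrix2.

Definition mx2E := (mx2E00, mx2E01, mx2E10, mx2E11, mulmx2E, mxtrace2E, det2E).

Section Matrix2Identities.
Variable R : comNzRingType.
Implicit Types A B C : 'M[R]_2.

Lemma mxtrace2_sqr A : \tr (A *m A) = \tr A ^+ 2 - 2%:R * \det A.
Proof. rewrite !mx2E; ring. Qed.

Lemma mxtrace2_sqrM A B : \tr (A *m A *m B) = \tr A * \tr (A *m B) - \det A * \tr B.
Proof. rewrite !mx2E; ring. Qed.

Lemma mxtrace2_swap A B C : \tr (A *m B *m C) + \tr (A *m C *m B) =
  \tr A * \tr (B *m C) + \tr B * \tr (A *m C) + \tr C * \tr (A *m B)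
  - \tr A * \tr B * \tr C.
Proof. rewrite !mx2E; ring. Qed.

Lemma det2D A B : \det (A + B) = \det A + \det B + \tr A * \tr B - \tr (A *m B).
Proof. rewrite !mx2E !mxE; ring. Qed.

End Matrix2Identities.

Definition mxconj (F : fieldType) n (g X : 'M[F]_n) := invmx g *m X *m g.

Section Conjugation.
Variables (F : fieldType) (n : nat).
Implicit Types g X Y D : 'M[F]_n.

Lemma unitmx_det g : \det g != 0 -> g \in unitmx.
Proof. by rewrite unitmxE unitfE. Qed.

Lemma mxconjM g X Y : g \in unitmx -> mxconj g X *m mxconj g Y = mxconj g (X *m Y).
Proof. by move=> hg; rewrite /mxconj !mulmxA mulmxK. Qed.

Lemma mxtrace_conj g X : g \in unitmx -> \tr (mxconj g X) = \tr X.
Proof. by move=> hg; rewrite /mxconj mxtrace_mulC mulmxA mulmxV // mul1mx. Qed.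

Lemma det_conj g X : g \in unitmx -> \det (mxconj g X) = \det X.
Proof.
by move=> hg; rewrite /mxconj !det_mulmx mulrAC -det_mulmx mulVmx // det1 mul1r.
Qed.

Lemma mxconj_scalar_comb g a b X : g \in unitmx ->
  mxconj g (a%:M + b *: X) = a%:M + b *: mxconj g X.
Proof.
move=> hg; rewrite /mxconj mulmxDr mulmxDl -scalemxAr -scalemxAl mul_mx_scalar.
by rewrite -scalemxAl mulVmx // scalemx1.
Qed.

Lemma mxconj_intertwine g X D : g \in unitmx -> X *m g = g *m D -> mxconj g X = D.
Proof. by move=> hg h; rewrite /mxconj -mulmxA h mulmxA mulVmx // mul1mx. Qed.

End Conjugation.

Section Invariants.
Variables (F : fieldType) (d : nat).
Notation pt := (pt F d).
Implicit Types (u v w : pt) (f : pt -> F).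

Lemma conj_ptE g u k : conj_pt g u k = mxconj g (u k).
Proof. by []. Qed.

Lemma conj_pt_intertwine g u v : g \in unitmx ->
  (forall k, u k *m g = g *m v k) -> conj_pt g u = v.
Proof. by move=> hg h; apply: functional_extensionality => k; apply: mxconj_intertwine. Qed.

Lemma polyfun_opp f : polyfun f -> polyfun (fun A => - f A).
Proof. by move=> h; apply: (pf_ext (pf_mul (pf_const _ (-1)) h)) => A; rewrite mulN1r. Qed.

Lemma polyfun_sub f f' : polyfun f -> polyfun f' -> polyfun (fun A => f A - f' A).
Proof. by move=> hf hf'; apply: pf_add => //; apply: polyfun_opp. Qed.

Definition polyfun_mx (M : pt -> 'M[F]_2) := forall i j, polyfun (fun A => M A i j).

Lemma polyfun_mx_coord k : polyfun_mx (fun A => A k).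
Proof. by move=> i j; apply: pf_coord. Qed.

Lemma polyfun_mxM M N : polyfun_mx M -> polyfun_mx N -> polyfun_mx (fun A => M A *m N A).
Proof.
move=> hM hN i j; apply: (pf_ext (f := fun A => M A i 0 * N A 0 j + M A i 1 * N A 1 j)).
  by apply: pf_add; apply: pf_mul.
by move=> A; rewrite mulmx2E.
Qed.

Lemma polyfun_mxtrace M : polyfun_mx M -> polyfun (fun A => \tr (M A)).
Proof.
move=> hM; apply: (pf_ext (f := fun A => M A 0 0 + M A 1 1)); first exact: pf_add.
by move=> A; rewrite mxtrace2E.
Qed.

Lemma polyfun_det M : polyfun_mx M -> polyfun (fun A => \det (M A)).
Proof.
move=> hM; apply: (pf_ext (f := fun A => M A 0 0 * M A 1 1 - M A 0 1 * M A 1 0)).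
  by apply: polyfun_sub; apply: pf_mul.
by move=> A; rewrite det2E.
Qed.

Definition same_invariants u v := forall f : pt -> F, invariant f -> f u = f v.

Lemma same_invariants_refl u : same_invariants u u. Proof. by []. Qed.

Lemma same_invariants_sym u v : same_invariants u v -> same_invariants v u.
Proof. by move=> h f hf; rewrite (h f hf). Qed.

Lemma same_invariants_trans u v w :
  same_invariants u v -> same_invariants v w -> same_invariants u w.
Proof. by move=> h1 h2 f hf; rewrite (h1 f hf) (h2 f hf). Qed.

Lemma same_invariants_conj g u : g \in unitmx -> same_invariants u (conj_pt g u).
Proof. by move=> hg f [_ hf]; rewrite hf. Qed.

Lemma same_invariants_intertwine g u v : g \in unitmx ->
  (forall k, u k *m g = g *m v k) -> same_invariants u v.
Proof. by move=> hg h; rewrite -(conj_pt_intertwine hg h); apply: same_invariants_conj. Qed.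

Definition poly_curve (P : F -> pt) :=
  forall k i j, exists p : {poly F}, forall s, P s k i j = p.[s].

Lemma poly_curve_mx2 (P : F -> pt) (a b c e : 'I_d -> {poly F}) :
  (forall s k, P s k = mx2 (a k).[s] (b k).[s] (c k).[s] (e k).[s]) -> poly_curve P.
Proof.
move=> hP k i j; case: (ord2P i) => ->; case: (ord2P j) => ->;
  [exists (a k) | exists (b k) | exists (c k) | exists (e k)];
  by move=> s; rewrite hP !mx2E.
Qed.

Lemma polyfun_poly_curve f P : polyfun f -> poly_curve P ->
  exists q : {poly F}, forall s, f (P s) = q.[s].
Proof.
move=> hf hP; elim: hf => [c | k i j | f1 f2 _ [p1 h1] _ [p2 h2]
  | f1 f2 _ [p1 h1] _ [p2 h2] | f1 f2 _ [p h] he].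
- by exists c%:P => s; rewrite hornerC.
- exact: hP.
- by exists (p1 + p2) => s; rewrite hornerD h1 h2.
- by exists (p1 * p2) => s; rewrite hornerM h1 h2.
- by exists p => s; rewrite -he h.
Qed.

Hypothesis hF : infinite_field F.

Lemma infinite_field_seq n : exists s : seq F, [/\ uniq s, size s = n & 0 \notin s].
Proof.
elim: n => [|n [s [us ss s0]]]; first by exists [::].
have [x] := hF (0 :: s); rewrite inE negb_or => /andP [x0 xs].
by exists (x :: s); rewrite /= inE negb_or xs us ss s0 eq_sym x0.
Qed.

(* q - c has infinitely many roots. *)
Lemma horner0_const (q : {poly F}) c : (forall s, s != 0 -> q.[s] = c) -> q.[0] = c.
Proof.
move=> h; have [/eqP|qc] := eqVneq (q - c%:P) 0.
  by rewrite subr_eq0 => /eqP ->; rewrite hornerC.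
have [s [us ss s0]] := infinite_field_seq (size (q - c%:P)).
suff /(max_poly_roots qc)/(_ us) : all (root (q - c%:P)) s by rewrite ss ltnn.
apply/allP => x xs; rewrite /root !hornerE h ?subrr //.
by apply: contraNneq s0 => <-.
Qed.

Lemma same_invariants_limit P w : poly_curve P ->
  (forall s, s != 0 -> same_invariants (P s) w) -> same_invariants (P 0) w.
Proof.
move=> hP h f hf; have [q hq] := polyfun_poly_curve hf.1 hP.
by rewrite hq; apply: horner0_const => s s0; rewrite -hq (h s s0 f hf).
Qed.

Definition diag_part u : pt := fun k => mx2 (u k 0 0) 0 0 (u k 1 1).

(* Conjugating by diag(1, s), resp. diag(s, 1), scales the off-diagonal entry
   of a triangular point by s; the curve extends polynomially to s = 0. *)
Lemma same_invariants_upper u : (forall k, u k 1 0 = 0) -> same_invariants u (diag_part u).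
Proof.
move=> hu; pose P s : pt := fun k => mx2 (u k 0 0) (s * u k 0 1) 0 (u k 1 1).
have -> : diag_part u = P 0.
  by apply: functional_extensionality => k; rewrite /P mul0r.
apply: same_invariants_sym; apply: same_invariants_limit => [|s s0].
  apply: (@poly_curve_mx2 _ (fun k => (u k 0 0)%:P) (fun k => 'X * (u k 0 1)%:P)
    (fun k => 0) (fun k => (u k 1 1)%:P)) => s k.
  by rewrite /P !hornerE.
apply: same_invariants_sym; apply: (@same_invariants_intertwine (mx2 1 0 0 s)).
  by apply: unitmx_det; rewrite !mx2E mul1r mul0r subr0.
by move=> k; apply: eq_mx2; rewrite /P !mx2E ?hu; ring.
Qed.

Lemma same_invariants_lower u : (forall k, u k 0 1 = 0) -> same_invariants u (diag_part u).
Proof.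
move=> hu; pose P s : pt := fun k => mx2 (u k 0 0) 0 (s * u k 1 0) (u k 1 1).
have -> : diag_part u = P 0.
  by apply: functional_extensionality => k; rewrite /P mul0r.
apply: same_invariants_sym; apply: same_invariants_limit => [|s s0].
  apply: (@poly_curve_mx2 _ (fun k => (u k 0 0)%:P) (fun k => 0)
    (fun k => 'X * (u k 1 0)%:P) (fun k => (u k 1 1)%:P)) => s k.
  by rewrite /P !hornerE.
apply: same_invariants_sym; apply: (@same_invariants_intertwine (mx2 s 0 0 1)).
  by apply: unitmx_det; rewrite !mx2E mulr1 mul0r subr0.
by move=> k; apply: eq_mx2; rewrite /P !mx2E ?hu; ring.
Qed.

Lemma same_invariants_triangular u : (forall k j, u k 0 1 * u j 1 0 = 0) ->
  same_invariants u (diag_part u).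
Proof.
move=> hu; have [/existsP [k uk]|] := boolP [exists k, u k 0 1 != 0].
  apply: same_invariants_upper => j.
  by apply/eqP; have /eqP := hu k j; rewrite mulf_eq0 (negbTE uk).
rewrite negb_exists => /forallP u0; apply: same_invariants_lower => k.
by apply/eqP/negbNE; apply: u0.
Qed.

End Invariants.

Section TraceData.
Variables (F : fieldType) (d : nat).
Notation pt := (pt F d).
Implicit Types (u v : pt) (s : seq (F * option 'I_d)).

(* [None] stands for the identity, so [comb u s] ranges over F 1 + sum_k F u k. *)
Definition letter u (o : option 'I_d) : 'M[F]_2 := if o is Some k then u k else 1%:M.

Definition comb u s : 'M[F]_2 := \sum_(p <- s) p.1 *: letter u p.2.

Definition same_trace_data u v :=
  (forall a b c, \tr (letter u a *m letter u b *m letter u c) =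
                 \tr (letter v a *m letter v b *m letter v c)) /\
  (forall a, \det (letter u a) = \det (letter v a)).

Lemma comb_cons u p s : comb u (p :: s) = p.1 *: letter u p.2 + comb u s.
Proof. by rewrite /comb big_cons. Qed.

Lemma comb1 u a o : comb u [:: (a, o)] = a *: letter u o.
Proof. by rewrite /comb big_seq1. Qed.

Lemma comb_coord u k : comb u [:: (1, Some k)] = u k.
Proof. by rewrite comb1 scale1r. Qed.

Lemma comb3 u a b c k m :
  comb u [:: (a, None); (b, Some k); (c, Some m)] = a%:M + b *: u k + c *: u m.
Proof. by rewrite !comb_cons [comb u [::]]big_nil /= scalemx1 addr0 addrA. Qed.

Lemma mxtrace_comb3 u s1 s2 s3 :
  \tr (comb u s1 *m comb u s2 *m comb u s3) = \sum_(p <- s1) \sum_(q <- s2) \sum_(r <- s3)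
    p.1 * q.1 * r.1 * \tr (letter u p.2 *m letter u q.2 *m letter u r.2).
Proof.
rewrite /comb mulmx_suml mulmx_suml raddf_sum; apply: eq_bigr => p _.
rewrite (mulmx_sumr (p.1 *: _)) mulmx_suml raddf_sum; apply: eq_bigr => q _.
rewrite mulmx_sumr raddf_sum; apply: eq_bigr => r _.
rewrite -!scalemxAl -!scalemxAr -!scalemxAl linearZ /= !mxtraceZ; ring.
Qed.

Lemma comb_conj g u s : g \in unitmx -> comb (conj_pt g u) s = mxconj g (comb u s).
Proof.
move=> hg; rewrite /comb /mxconj mulmx_sumr mulmx_suml; apply: eq_bigr => -[a [k|]] _ /=.
  by rewrite -scalemxAr -scalemxAl.
by rewrite -scalemxAr -scalemxAl mulmx1 mulVmx.
Qed.

Lemma same_trace_data_conj g g' u v : g \in unitmx -> g' \in unitmx ->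
  same_trace_data u v -> same_trace_data (conj_pt g u) (conj_pt g' v).
Proof.
have letter_conj h w o : h \in unitmx -> letter (conj_pt h w) o = mxconj h (letter w o).
  by move=> hh; case: o => [k|] //=; rewrite /mxconj mulmx1 mulVmx.
move=> hg hg' [h1 h2]; split=> [a b c|a].
  by rewrite !letter_conj // !mxconjM // !mxtrace_conj.
by rewrite !letter_conj // !det_conj.
Qed.

Section SameData.
Variables u v : pt.
Hypothesis huv : same_trace_data u v.

Lemma same_mxtrace_comb3 s1 s2 s3 : \tr (comb u s1 *m comb u s2 *m comb u s3) =
  \tr (comb v s1 *m comb v s2 *m comb v s3).
Proof.
rewrite !mxtrace_comb3; do 3!(apply: eq_bigr => ? _); by rewrite huv.1.
Qed.

Let comb_unit w : comb w [:: (1, None)] = 1%:M.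
Proof. by rewrite comb1 scale1r. Qed.

Lemma same_mxtrace_comb2 s1 s2 :
  \tr (comb u s1 *m comb u s2) = \tr (comb v s1 *m comb v s2).
Proof.
by have := same_mxtrace_comb3 s1 s2 [:: (1, None)]; rewrite !comb_unit !mulmx1.
Qed.

Lemma same_mxtrace_comb s : \tr (comb u s) = \tr (comb v s).
Proof. by have := same_mxtrace_comb2 s [:: (1, None)]; rewrite !comb_unit !mulmx1. Qed.

Lemma same_det_comb s : \det (comb u s) = \det (comb v s).
Proof.
elim: s => [|p s IH]; first by rewrite /comb !big_nil.
rewrite !comb_cons !det2D IH -!comb1 same_mxtrace_comb (same_mxtrace_comb s).
by rewrite same_mxtrace_comb2 !comb1 !detZ huv.2.
Qed.

Lemma same_mxtrace k : \tr (u k) = \tr (v k).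
Proof. by have := same_mxtrace_comb [:: (1, Some k)]; rewrite !comb_coord. Qed.

Lemma same_det k : \det (u k) = \det (v k).
Proof. by have := same_det_comb [:: (1, Some k)]; rewrite !comb_coord. Qed.

Lemma same_mxtrace2 k j : \tr (u k *m u j) = \tr (v k *m v j).
Proof.
by have := same_mxtrace_comb2 [:: (1, Some k)] [:: (1, Some j)]; rewrite !comb_coord.
Qed.

Lemma same_mxtrace_combM s k : \tr (comb u s *m u k) = \tr (comb v s *m v k).
Proof. by have := same_mxtrace_comb2 s [:: (1, Some k)]; rewrite !comb_coord. Qed.

Lemma same_mxtrace_combMM s k j :
  \tr (comb u s *m u k *m u j) = \tr (comb v s *m v k *m v j).
Proof.
by have := same_mxtrace_comb3 s [:: (1, Some k)] [:: (1, Some j)]; rewrite !comb_coord.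
Qed.

End SameData.

Definition same_Sd u v := forall f, Sd f -> f u = f v.

Section SdData.
Variables u v : pt.
Hypothesis huv : same_Sd u v.

Let Sd_mxtrace i : \tr (u i) = \tr (v i).
Proof. by apply: (huv (f := fun A => \tr (A i))); left; exists i. Qed.

Let Sd_det i : \det (u i) = \det (v i).
Proof. by apply: (huv (f := fun A => \det (A i))); right; left; exists i. Qed.

Let Sd_mxtrace2 i j : \tr (u i *m u j) = \tr (v i *m v j).
Proof.
have [ij|ji|/val_inj ->] := ltngtP i j.
- by apply: (huv (f := fun A => \tr (A i *m A j))); do 2 right; left; exists i, j.
- rewrite mxtrace_mulC [RHS]mxtrace_mulC.
  by apply: (huv (f := fun A => \tr (A j *m A i))); do 2 right; left; exists j, i.
- by rewrite !mxtrace2_sqr Sd_mxtrace Sd_det.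
Qed.

(* The trace of a word in three distinct letters is determined by the trace of
   the word in increasing order and words of length <= 2. *)
Let Sd_mxtrace3_min (i j k : 'I_d) : (i <= j)%N -> (i <= k)%N ->
  \tr (u i *m u j *m u k) = \tr (v i *m v j *m v k).
Proof.
rewrite [(i <= j)%N]leq_eqVlt [(i <= k)%N]leq_eqVlt.
move=> /orP [/eqP/val_inj <- | ij] /orP [/eqP/val_inj <- | ik].
- by rewrite !mxtrace2_sqrM !Sd_mxtrace !Sd_det !Sd_mxtrace2.
- by rewrite !mxtrace2_sqrM !Sd_mxtrace !Sd_det !Sd_mxtrace2.
- by rewrite -(mxtrace_rot (u i)) -(mxtrace_rot (v i)) !mxtrace2_sqrM
    !Sd_mxtrace !Sd_det !Sd_mxtrace2.
have [jk|kj|/val_inj <-] := ltngtP j k.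
- by apply: (huv (f := fun A => \tr (A i *m A j *m A k))); do 3 right; exists i, j, k.
- apply: (addIr (\tr (u i *m u k *m u j))).
  rewrite [LHS]mxtrace2_swap [in RHS](huv (f := fun A => \tr (A i *m A k *m A j))).
    by rewrite mxtrace2_swap !Sd_mxtrace !Sd_mxtrace2.
  by do 3 right; exists i, k, j.
- by rewrite (mxtrace_rot (u i)) (mxtrace_rot (v i)) !mxtrace2_sqrM
    !Sd_mxtrace !Sd_det Sd_mxtrace2.
Qed.

Let Sd_mxtrace3 i j k : \tr (u i *m u j *m u k) = \tr (v i *m v j *m v k).
Proof.
have rot1 : \tr (u i *m u j *m u k) = \tr (u j *m u k *m u i) /\
            \tr (v i *m v j *m v k) = \tr (v j *m v k *m v i).
  by rewrite (mxtrace_rot (u i)) (mxtrace_rot (v i)).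
have rot2 : \tr (u i *m u j *m u k) = \tr (u k *m u i *m u j) /\
            \tr (v i *m v j *m v k) = \tr (v k *m v i *m v j).
  by rewrite -(mxtrace_rot (u k)) -(mxtrace_rot (v k)).
have [ij|ji] := leqP i j; have [ik|ki] := leqP i k.
- exact: Sd_mxtrace3_min.
- by rewrite rot2.1 rot2.2; apply: Sd_mxtrace3_min; lia.
- by rewrite rot1.1 rot1.2; apply: Sd_mxtrace3_min; lia.
have [jk|kj] := leqP j k.
- by rewrite rot1.1 rot1.2; apply: Sd_mxtrace3_min; lia.
- by rewrite rot2.1 rot2.2; apply: Sd_mxtrace3_min; lia.
Qed.

Lemma same_Sd_trace_data : same_trace_data u v.
Proof.
split=> [[a|] [b|] [c|]|[a|] //] /=; rewrite ?mul1mx ?mulmx1 //;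
  by rewrite ?Sd_mxtrace3 ?Sd_mxtrace2 ?Sd_mxtrace ?Sd_det.
Qed.

End SdData.

End TraceData.

Section NormalForms.
Variable F : fieldType.
Implicit Types X N : 'M[F]_2.

Definition distinct_eigenvalues X :=
  exists l m, [/\ l != m, \tr X = l + m & \det X = l * m].

Definition nilpotent2 X := \tr X = 0 /\ \det X = 0.

Definition E12 : 'M[F]_2 := mx2 0 1 0 0.

Lemma conj_diag X l m : l != m -> \tr X = l + m -> \det X = l * m ->
  exists2 g, g \in unitmx & X *m g = g *m mx2 l 0 0 m.
Proof.
rewrite mxtrace2E det2E => lm ht hd.
have he : X 1 1 = l + m - X 0 0 by rewrite -ht; ring.
have [c0|c0] := eqVneq (X 1 0) 0; last first.
  have hb : X 0 1 = (X 0 0 * X 1 1 - l * m) / X 1 0 by rewrite -hd; field.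
  exists (mx2 (l - X 1 1) (m - X 1 1) (X 1 0) (X 1 0)).
    apply: unitmx_det; rewrite !mx2E.
    have -> : (l - X 1 1) * X 1 0 - (m - X 1 1) * X 1 0 = X 1 0 * (l - m) by ring.
    by rewrite mulf_neq0 // subr_eq0.
  by apply: eq_mx2; rewrite !mx2E ?hb ?he; field.
have : (X 0 0 - l) * (X 0 0 - m) = 0.
  have -> : (X 0 0 - l) * (X 0 0 - m) = X 0 0 * (X 0 0 + X 1 1)
    - (X 0 0 * X 1 1 - X 0 1 * X 1 0) - X 0 0 * (l + m) + l * m by rewrite c0; ring.
  by rewrite ht hd; ring.
move/eqP; rewrite mulf_eq0 !subr_eq0 => /orP [] /eqP ha.
  exists (mx2 1 (X 0 1) 0 (m - l)).
    by apply: unitmx_det; rewrite !mx2E mul1r mulr0 subr0 subr_eq0 eq_sym.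
  by apply: eq_mx2; rewrite !mx2E ?c0 ?he ?ha; ring.
exists (mx2 (X 0 1) 1 (l - m) 0).
  by apply: unitmx_det; rewrite !mx2E mulr0 mul1r sub0r oppr_eq0 subr_eq0.
by apply: eq_mx2; rewrite !mx2E ?c0 ?he ?ha; ring.
Qed.

Lemma conj_nilpotent N : nilpotent2 N -> N != 0 ->
  exists2 g, g \in unitmx & N *m g = g *m E12.
Proof.
rewrite /nilpotent2 mxtrace2E det2E => -[ht hd] N0.
have he : N 1 1 = - N 0 0 by apply: (addrI (N 0 0)); rewrite ht subrr.
have [c0|c0] := eqVneq (N 1 0) 0; last first.
  have hb : N 0 1 = N 0 0 * N 1 1 / N 1 0.
    by apply: (mulIf c0); rewrite mulfVK //; apply/eqP; rewrite eq_sym -subr_eq0 hd.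
  exists (mx2 (N 0 0) 1 (N 1 0) 0).
    by apply: unitmx_det; rewrite !mx2E mulr0 mul1r sub0r oppr_eq0.
  by apply: eq_mx2; rewrite !mx2E ?hb ?he; field.
have a0 : N 0 0 = 0.
  have /eqP : - (N 0 0 * N 0 0) = 0 by rewrite -hd he c0; ring.
  by rewrite oppr_eq0 mulf_eq0 orbb => /eqP.
have b0 : N 0 1 != 0.
  by apply: contraNneq N0 => b0; apply/eqP/eq_mx2; rewrite ?mxE ?a0 ?b0 ?c0 ?he ?a0 ?oppr0.
exists (mx2 (N 0 1) 0 0 1).
  by apply: unitmx_det; rewrite !mx2E mulr1 mulr0 subr0.
by apply: eq_mx2; rewrite /E12 !mx2E ?he ?a0 ?c0; ring.
Qed.

(* The companion matrix of r^2 - t r + e. *)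
Definition companion2 (t e : F) : 'M[F]_2 := mx2 0 (- e) 1 t.

Lemma conj_companion X : X 1 0 != 0 ->
  exists2 g, g \in unitmx & X *m g = g *m companion2 (\tr X) (\det X).
Proof.
move=> c0; exists (mx2 1 (X 0 0) 0 (X 1 0)).
  by apply: unitmx_det; rewrite !mx2E mul1r mulr0 subr0.
by apply: eq_mx2; rewrite /companion2 !mx2E; ring.
Qed.

End NormalForms.

(* Derives [x = y] from [H : x' = y'] when [x = x'] and [y' = y] hold by [ring]. *)
Ltac ring_from H := refine (etrans _ (etrans H _)); ring.

Lemma lin2_cancel (F : fieldType) (l m x y x' y' : F) : l != m ->
  x + y = x' + y' -> l * x + m * y = l * x' + m * y' -> x = x'.
Proof.
move=> lm e1 e2; apply/eqP; rewrite -subr_eq0.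
have : (l - m) * (x - x') = 0.
  have -> : (l - m) * (x - x') = (l * x + m * y) - (l * x' + m * y')
    - m * ((x + y) - (x' + y')) by ring.
  by rewrite e1 e2 !subrr mulr0 subr0.
by move/eqP; rewrite mulf_eq0 !subr_eq0 (negbTE lm).
Qed.

Section DistinctEigenvalues.
Variables (F : fieldType) (d : nat).
Hypothesis hF : infinite_field F.
Notation pt := (pt F d).
Implicit Types u v : pt.

Lemma same_invariants_diag_conj u v k j : u k 0 1 * u j 1 0 != 0 ->
  (forall n, u n 0 0 = v n 0 0) -> (forall n, u n 1 1 = v n 1 1) ->
  (forall n n', u n 0 1 * u n' 1 0 = v n 0 1 * v n' 1 0) -> same_invariants u v.
Proof.
move=> ukj h00 h11 h01.
have [uk0 uj0] : u k 0 1 != 0 /\ u j 1 0 != 0 by apply/andP; rewrite -negb_or -mulf_eq0.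
have vj0 : v j 1 0 != 0 by apply: contraTneq ukj => vj; rewrite h01 vj mulr0 eqxx.
pose t := u j 1 0 / v j 1 0.
apply: (@same_invariants_intertwine _ _ (mx2 1 0 0 t)).
  by apply: unitmx_det; rewrite !mx2E mul1r mulr0 subr0 mulf_neq0 // invr_eq0.
move=> n; have e : u n 1 0 * v j 1 0 = u j 1 0 * v n 1 0.
  apply: (mulfI uk0); transitivity (v k 0 1 * v j 1 0 * v n 1 0).
    by rewrite mulrA h01; ring.
  by rewrite -h01; ring.
apply: eq_mx2; rewrite !mx2E ?h00 ?h11 /t.
- by ring.
- by rewrite mulr0 add0r mul1r mul0r addr0 mulrA h01 mulfK.
- by rewrite mulr1 mulr0 addr0 mul0r add0r mulrAC -e mulfK.
- by ring.
Qed.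

Lemma same_invariants_diag_products u v :
  (forall k, u k 0 0 = v k 0 0) -> (forall k, u k 1 1 = v k 1 1) ->
  (forall k j, u k 0 1 * u j 1 0 = v k 0 1 * v j 1 0) -> same_invariants u v.
Proof.
move=> h00 h11 h01.
have [/existsP [k /existsP [j ukj]] | ] :=
  boolP [exists k, exists j, u k 0 1 * u j 1 0 != 0].
  exact: same_invariants_diag_conj ukj h00 h11 h01.
move=> u0; have {}u0 k j : u k 0 1 * u j 1 0 = 0.
  by apply/eqP; apply: contraNT u0 => ukj; apply/existsP; exists k; apply/existsP; exists j.
have v0 k j : v k 0 1 * v j 1 0 = 0 by rewrite -h01.
apply: same_invariants_trans (same_invariants_triangular hF u0) _.
have -> : diag_part u = diag_part v.
  by apply: functional_extensionality => k; rewrite /diag_part h00 h11.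
exact/same_invariants_sym/same_invariants_triangular.
Qed.

(* Pairing with D = diag(l, m) and with 1 separates the two diagonal terms of a trace. *)
Lemma same_invariants_comb_diag u v s l m : l != m -> same_trace_data u v ->
  comb u s = mx2 l 0 0 m -> comb v s = mx2 l 0 0 m -> same_invariants u v.
Proof.
move=> lm huv hu hv.
have e1 k : u k 0 0 + u k 1 1 = v k 0 0 + v k 1 1.
  by rewrite -!mxtrace2E (same_mxtrace huv).
have e2 k : l * u k 0 0 + m * u k 1 1 = l * v k 0 0 + m * v k 1 1.
  by have := same_mxtrace_combM huv s k; rewrite hu hv !mx2E => H; ring_from H.
have h00 k : u k 0 0 = v k 0 0 := lin2_cancel lm (e1 k) (e2 k).
have h11 k : u k 1 1 = v k 1 1 by have := e1 k; rewrite h00 => /addrI.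
have e3 k j : (u k 0 0 * u j 0 0 + u k 0 1 * u j 1 0)
    + (u k 1 0 * u j 0 1 + u k 1 1 * u j 1 1)
  = (v k 0 0 * v j 0 0 + v k 0 1 * v j 1 0)
    + (v k 1 0 * v j 0 1 + v k 1 1 * v j 1 1).
  by have := same_mxtrace2 huv k j; rewrite !mx2E => H; ring_from H.
have e4 k j : l * (u k 0 0 * u j 0 0 + u k 0 1 * u j 1 0)
    + m * (u k 1 0 * u j 0 1 + u k 1 1 * u j 1 1)
  = l * (v k 0 0 * v j 0 0 + v k 0 1 * v j 1 0)
    + m * (v k 1 0 * v j 0 1 + v k 1 1 * v j 1 1).
  by have := same_mxtrace_combMM huv s k j; rewrite hu hv !mx2E => H; ring_from H.
apply: (same_invariants_diag_products h00 h11) => k j.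
by have := lin2_cancel lm (e3 k j) (e4 k j); rewrite !h00 => /addrI.
Qed.

Lemma same_invariants_distinct u v s : same_trace_data u v ->
  distinct_eigenvalues (comb u s) -> same_invariants u v.
Proof.
move=> huv [l [m [lm ht hd]]].
have [g hg eg] := conj_diag lm ht hd.
have [g' hg' eg'] := conj_diag lm (etrans (esym (same_mxtrace_comb huv s)) ht)
  (etrans (esym (same_det_comb huv s)) hd).
apply: same_invariants_trans (same_invariants_conj u hg) _.
apply: same_invariants_sym; apply: same_invariants_trans (same_invariants_conj v hg') _.
apply: same_invariants_sym; apply: (same_invariants_comb_diag (s := s) lm).
- exact: same_trace_data_conj.
- by rewrite comb_conj // (mxconj_intertwine hg eg).
- by rewrite comb_conj // (mxconj_intertwine hg' eg').
Qed.

End DistinctEigenvalues.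

Section Pivot.
Variables (F : fieldType) (d : nat).
Notation pt := (pt F d).
Implicit Types u v w : pt.

(* Pairing with E12 reads off the second row of every coordinate; the pivot
   w l 1 0 <> 0 then recovers the first row. *)
Lemma pivot_rigid w v s l : same_trace_data w v ->
  comb w s = E12 F -> comb v s = E12 F -> w l 1 0 != 0 -> w l 1 1 = v l 1 1 -> w = v.
Proof.
move=> hwv hw hv c0 e11.
have h10 k : w k 1 0 = v k 1 0.
  by have := same_mxtrace_combM hwv s k; rewrite hw hv /E12 !mx2E => H; ring_from H.
have htr k : w k 0 0 + w k 1 1 = v k 0 0 + v k 1 1.
  by rewrite -!mxtrace2E (same_mxtrace hwv).
have h00l : w l 0 0 = v l 0 0 by have := htr l; rewrite e11 => /addIr.
have h11 k : w k 1 1 = v k 1 1.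
  have := same_mxtrace_combMM hwv s k l; rewrite hw hv /E12 !mx2E -!h10 -h00l => H.
  by apply: (mulIf c0); apply: (addrI (w k 1 0 * w l 0 0)); ring_from H.
have h00 k : w k 0 0 = v k 0 0 by have := htr k; rewrite h11 => /addIr.
have h01l : w l 0 1 = v l 0 1.
  have := same_det hwv l; rewrite !det2E -!h00 -!h11 -!h10 => H.
  by apply: (mulIf c0); apply: oppr_inj; apply: (addrI (w l 0 0 * w l 1 1)); ring_from H.
have h01 k : w k 0 1 = v k 0 1.
  have := same_mxtrace2 hwv k l; rewrite !mx2E -!h00 -!h11 -!h10 -h01l => H.
  apply: (mulIf c0).
  apply: (addrI (w k 0 0 * w l 0 0 + w k 1 0 * w l 0 1 + w k 1 1 * w l 1 1)).
  by ring_from H.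
by apply: functional_extensionality => k; apply: eq_mx2.
Qed.

Lemma same_trace_data_conjl g u v : g \in unitmx ->
  same_trace_data u v -> same_trace_data (conj_pt g u) v.
Proof.
move=> hg huv; have := same_trace_data_conj hg (unitmx1 _ _) huv.
suff -> : conj_pt 1%:M v = v by [].
by apply: functional_extensionality => k; rewrite /conj_pt invmx1 mul1mx mulmx1.
Qed.

Lemma same_invariants_comb_E12 u v s l : same_trace_data u v ->
  comb u s = E12 F -> comb v s = E12 F -> u l 1 0 != 0 -> same_invariants u v.
Proof.
move=> huv hu hv c0; pose t := (v l 1 1 - u l 1 1) / u l 1 0.
pose T := mx2 1 t 0 1.
have hT : T \in unitmx by apply: unitmx_det; rewrite !mx2E mul1r mulr0 subr0 oner_eq0.
have shear X : mxconj T X = mx2 (X 0 0 - t * X 1 0)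
    (X 0 1 + t * (X 0 0 - X 1 1) - t ^+ 2 * X 1 0) (X 1 0) (X 1 1 + t * X 1 0).
  by apply: mxconj_intertwine => //; apply: eq_mx2; rewrite !mx2E; ring.
apply: same_invariants_trans (same_invariants_conj u hT) _.
rewrite (@pivot_rigid (conj_pt T u) v s l) //.
- exact: same_trace_data_conjl.
- by rewrite comb_conj // hu shear /E12 !mx2E; congr mx2; ring.
- by rewrite conj_ptE shear mx2E.
- by rewrite conj_ptE shear mx2E /t; field.
Qed.

Lemma same_invariants_pivot u v s l : same_trace_data u v -> nilpotent2 (comb u s) ->
  \tr (comb u s *m u l) != 0 -> same_invariants u v.
Proof.
move=> huv [ht hd] hl.
have N0 w : \tr (comb w s *m w l) != 0 -> comb w s != 0.
  by apply: contraNneq => ->; rewrite mul0mx mxtrace0.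
have hl' : \tr (comb v s *m v l) != 0 by rewrite -(same_mxtrace_combM huv).
have [g hg eg] := conj_nilpotent (conj ht hd) (N0 u hl).
have [g' hg' eg'] := conj_nilpotent (conj (etrans (esym (same_mxtrace_comb huv s)) ht)
  (etrans (esym (same_det_comb huv s)) hd)) (N0 v hl').
apply: same_invariants_trans (same_invariants_conj u hg) _.
apply: same_invariants_sym; apply: same_invariants_trans (same_invariants_conj v hg') _.
apply: same_invariants_sym; apply: (same_invariants_comb_E12 (s := s) (l := l)).
- exact: same_trace_data_conj.
- by rewrite comb_conj // (mxconj_intertwine hg eg).
- by rewrite comb_conj // (mxconj_intertwine hg' eg').
- have <- : \tr (mxconj g (comb u s) *m mxconj g (u l)) = conj_pt g u l 1 0.
    by rewrite (mxconj_intertwine hg eg) /E12 !mx2E; ring.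
  by rewrite mxconjM // mxtrace_conj.
Qed.

End Pivot.

(* If Y is not in F + F X, then V := F + F X + F Y has dimension 3 and so
   meets every plane "column i vanishes" nontrivially.  Without elements with
   distinct eigenvalues, V then contains nonzero multiples of E12 and E21,
   whose product has nonzero trace, although nilpotents are orthogonal to V. *)
Section Span.
Variables (F : fieldType) (X Y : 'M[F]_2).
Hypothesis X_nonscalar : ~~ is_scalar_mx X.
Hypothesis no_distinct : forall a b c, ~ distinct_eigenvalues (a%:M + b *: X + c *: Y).
Hypothesis nilpotent_orth : forall a b c, nilpotent2 (a%:M + b *: X + c *: Y) ->
  \tr ((a%:M + b *: X + c *: Y) *m X) = 0 /\ \tr ((a%:M + b *: X + c *: Y) *m Y) = 0.
Hypothesis Y_indep : forall a b, Y <> a%:M + b *: X.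

Let V a b c := a%:M + b *: X + c *: Y.

Let V_neq0 (a b c : F) : (b != 0) || (c != 0) -> V a b c != 0.
Proof.
move=> bc; apply/eqP; rewrite /V => V0.
have cY : c *: Y = - (a%:M + b *: X) by apply/eqP; rewrite -addr_eq0 addrC V0.
have [c0|c0] := eqVneq c 0; last first.
  apply: (Y_indep (a := - (a / c)) (b := - (b / c))).
  rewrite -[Y](scalerK c0) cY scalerN scalerDr scale_scalar_mx scalerA opprD.
  by rewrite scaleNr raddfN !(mulrC c^-1).
move: cY bc; rewrite c0 scale0r eqxx orbF => /esym/eqP.
rewrite oppr_eq0 addrC addr_eq0 => /eqP bX b0.
move/is_scalar_mxP: X_nonscalar; apply; exists (- (a / b)).
by rewrite -[X](scalerK b0) bX scalerN scale_scalar_mx raddfN mulrC.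
Qed.

Let V_kill_column (i j : 'I_2) : i != j ->
  exists a b c : F, [/\ (b != 0) || (c != 0), V a b c i i = 0 & V a b c j i = 0].
Proof.
move=> ij; rewrite /V.
have [xy|] := boolP ((X j i != 0) || (Y j i != 0)).
  exists (X i i * Y j i - Y i i * X j i), (- Y j i), (X j i).
  rewrite oppr_eq0 orbC xy !mxE !eqxx eq_sym (negbTE ij) /= mulr1n mulr0n.
  by split=> //; ring.
rewrite negb_or !negbK => /andP [/eqP xj /eqP yj].
exists (- X i i), 1, 0.
by rewrite oner_eq0 !mxE !eqxx eq_sym (negbTE ij) /= mulr1n mulr0n xj; split=> //; ring.
Qed.

Let V_single_entry (i j : 'I_2) : i != j ->
  exists a b c : F,
    [/\ V a b c i j != 0, V a b c i i = 0, V a b c j i = 0 & V a b c j j = 0].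
Proof.
move=> ij; have [a [b [c [bc hii hji]]]] := V_kill_column ij; exists a, b, c.
have hZ : ~ distinct_eigenvalues (V a b c) := @no_distinct a b c.
move: (V a b c) (V_neq0 a bc) hii hji hZ => Z Z0 hii hji hZ.
have ij_cases : (i = 0 /\ j = 1) \/ (i = 1 /\ j = 0).
  by move: ij; case: (ord2P i) => ->; case: (ord2P j) => -> //= _; [left | right].
have hjj : Z j j = 0.
  apply: NNPP => hjj; apply: hZ; exists 0, (Z j j).
  split; first by rewrite eq_sym; apply/eqP.
    by case: ij_cases hii => -[? ?]; subst i j; rewrite mxtrace2E => ->; ring.
  by case: ij_cases hii hji => -[? ?]; subst i j; rewrite det2E => -> ->; ring.
split=> //; apply: contraNneq Z0 => hij; apply/eqP/matrixP => p q; rewrite mxE.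
by case: ij_cases hii hji hjj hij => -[? ?]; subst i j => *;
  case: (ord2P p) => ->; case: (ord2P q) => ->.
Qed.

Lemma scalar_comb_span_contra : False.
Proof.
have [a [b [c [z01 z00 z10 z11]]]] := V_single_entry (isT : (0 : 'I_2) != 1).
have [a' [b' [c' [w10 w11 w01 w00]]]] := V_single_entry (isT : (1 : 'I_2) != 0).
have Znil : nilpotent2 (V a b c).
  by rewrite /nilpotent2 mxtrace2E det2E z00 z11 z10; split; ring.
have [tX tY] := nilpotent_orth Znil.
have : \tr (V a b c *m V a' b' c') = 0.
  rewrite {2}/V !mulmxDr mul_mx_scalar -!scalemxAr !mxtraceD !mxtraceZ tX tY.
  by rewrite (proj1 Znil); ring.
rewrite mxtrace2E !mulmx2E z00 z10 z11 w00 w11 => /eqP.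
by rewrite !(mul0r, mulr0, add0r, addr0) mulf_eq0 (negbTE z01) (negbTE w10).
Qed.

End Span.

Lemma scalar_comb_span (F : fieldType) (X Y : 'M[F]_2) : ~~ is_scalar_mx X ->
  (forall a b c, ~ distinct_eigenvalues (a%:M + b *: X + c *: Y)) ->
  (forall a b c, nilpotent2 (a%:M + b *: X + c *: Y) ->
    \tr ((a%:M + b *: X + c *: Y) *m X) = 0 /\ \tr ((a%:M + b *: X + c *: Y) *m Y) = 0) ->
  exists a b, Y = a%:M + b *: X.
Proof.
move=> hX hd hn; apply: NNPP => hY; apply: (scalar_comb_span_contra hX hd hn).
by move=> a b e; apply: hY; exists a, b.
Qed.

Section Companion.
Variables (F : fieldType) (t e : F).
Hypothesis irreducible_te : forall r, r ^+ 2 - t * r + e != 0.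
Notation C := (companion2 t e).

(* The norm form det (x + y C) is anisotropic, and the data determine det (M - M'). *)
Lemma companion2_comb_inj a b a' b' :
  \tr (a%:M + b *: C) = \tr (a'%:M + b' *: C) ->
  \tr (C *m (a%:M + b *: C)) = \tr (C *m (a'%:M + b' *: C)) ->
  \det (a%:M + b *: C) = \det (a'%:M + b' *: C) -> a = a' /\ b = b'.
Proof.
set M := a%:M + b *: C; set M' := a'%:M + b' *: C => h1 h2 h3.
have hq : (a - a') ^+ 2 + (a - a') * (b - b') * t + (b - b') ^+ 2 * e = 0.
  have -> : (a - a') ^+ 2 + (a - a') * (b - b') * t + (b - b') ^+ 2 * e =
      (\det M - \det M') - (a' + b' * t) * (\tr M - \tr M')
      + b' * (\tr (C *m M) - \tr (C *m M')).
    by rewrite /M /M' /C /companion2 !scalar_comb2E !mx2E; ring.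
  by rewrite h1 h2 h3 !subrr !mulr0 subrr addr0.
have hb : b = b'.
  apply/eqP; apply: contraT => hb; have hb0 : b - b' != 0 by rewrite subr_eq0.
  move: (irreducible_te (- (a - a') / (b - b'))).
  rewrite -[X in X != 0](mulfK (mulf_neq0 hb0 hb0)).
  have -> : ((- (a - a') / (b - b')) ^+ 2 - t * (- (a - a') / (b - b')) + e)
      * ((b - b') * (b - b')) = (a - a') ^+ 2 + (a - a') * (b - b') * t + (b - b') ^+ 2 * e.
    by field.
  by rewrite hq mul0r eqxx.
split=> //; move/eqP: hq; rewrite hb subrr mulr0 mul0r expr0n /= mul0r !addr0.
by rewrite sqrf_eq0 subr_eq0 => /eqP.
Qed.

End Companion.

Lemma lower_entry_neq0 (F : fieldType) (X : 'M[F]_2) :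
  (forall r, r ^+ 2 - \tr X * r + \det X != 0) -> X 1 0 != 0.
Proof.
move=> hr; apply: contraNneq (hr (X 0 0)) => c0.
by rewrite mxtrace2E det2E c0; apply/eqP; ring.
Qed.

Lemma double_root (F : fieldType) (X : 'M[F]_2) r : ~ distinct_eigenvalues X ->
  r ^+ 2 - \tr X * r + \det X = 0 -> \tr X = r + r /\ \det X = r * r.
Proof.
move=> hX hr; have hd : \det X = r * (\tr X - r) by rewrite -[\det X]subr0 -hr; ring.
have [er|ner] := eqVneq r (\tr X - r).
  have ht : \tr X = r + r by rewrite {2}er; ring.
  by rewrite hd ht; split=> //; ring.
by case: hX; exists r, (\tr X - r); split=> //; ring.
Qed.

Section Degenerate.
Variables (F : fieldType) (d : nat).
Notation pt := (pt F d).
Implicit Types u v w : pt.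

Definition has_distinct_comb u := exists s, distinct_eigenvalues (comb u s).

Definition has_pivot u :=
  exists s l, nilpotent2 (comb u s) /\ \tr (comb u s *m u l) != 0.

Lemma has_distinct_comb_data u v : same_trace_data u v ->
  has_distinct_comb v -> has_distinct_comb u.
Proof.
move=> huv [s [l [m [lm ht hd]]]]; exists s, l, m.
by rewrite (same_mxtrace_comb huv) (same_det_comb huv).
Qed.

Lemma has_pivot_data u v : same_trace_data u v -> has_pivot v -> has_pivot u.
Proof.
move=> huv [s [l [[ht hd] hl]]]; exists s, l.
by rewrite /nilpotent2 (same_mxtrace_comb huv) (same_det_comb huv) (same_mxtrace_combM huv).
Qed.

Lemma comb_span u k m : ~ has_distinct_comb u -> ~ has_pivot u -> ~~ is_scalar_mx (u k) ->
  exists a b, u m = a%:M + b *: u k.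
Proof.
move=> hd hp hk; apply: scalar_comb_span => // a b c;
  pose s := [:: (a, None); (b, Some k); (c, Some m)].
  by move=> h; apply: hd; exists s; rewrite comb3.
move=> hN; split; apply: NNPP => h; apply: hp; exists s.
  by exists k; rewrite comb3; split=> //; apply/eqP.
by exists m; rewrite comb3; split=> //; apply/eqP.
Qed.

Lemma same_invariants_companion u v k : same_trace_data u v ->
  ~ has_distinct_comb u -> ~ has_pivot u ->
  (forall r, r ^+ 2 - \tr (u k) * r + \det (u k) != 0) -> same_invariants u v.
Proof.
move=> huv hd hp hr.
have hd' : ~ has_distinct_comb v by move/(has_distinct_comb_data huv).
have hp' : ~ has_pivot v by move/(has_pivot_data huv).
have hr' r : r ^+ 2 - \tr (v k) * r + \det (v k) != 0.
  by rewrite -(same_mxtrace huv) -(same_det huv).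
have nonscalar w : w k 1 0 != 0 -> ~~ is_scalar_mx (w k).
  by move=> w0; apply/is_scalar_mxP => -[a wa]; move: w0; rewrite wa mxE eqxx.
have [g hg eg] := conj_companion (lower_entry_neq0 hr).
have [g' hg' eg'] := conj_companion (lower_entry_neq0 hr').
rewrite -(same_mxtrace huv) -(same_det huv) in eg'.
set C := companion2 _ _ in eg eg'.
apply: same_invariants_trans (same_invariants_conj u hg) _.
apply: same_invariants_sym; apply: same_invariants_trans (same_invariants_conj v hg') _.
suff -> : conj_pt g' v = conj_pt g u by apply: same_invariants_refl.
apply: functional_extensionality => m.
have [a [b um]] := comb_span m hd hp (nonscalar u (lower_entry_neq0 hr)).
have [a' [b' vm]] := comb_span m hd' hp' (nonscalar v (lower_entry_neq0 hr')).
have cu : conj_pt g u m = a%:M + b *: C.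
  by rewrite conj_ptE um mxconj_scalar_comb // (mxconj_intertwine hg eg).
have cv : conj_pt g' v m = a'%:M + b' *: C.
  by rewrite conj_ptE vm mxconj_scalar_comb // (mxconj_intertwine hg' eg').
have ck : conj_pt g u k = C by rewrite conj_ptE (mxconj_intertwine hg eg).
have ck' : conj_pt g' v k = C by rewrite conj_ptE (mxconj_intertwine hg' eg').
have hcc := same_trace_data_conj hg hg' huv.
rewrite cu cv; suff [-> ->] : a = a' /\ b = b' by [].
apply: (companion2_comb_inj hr).
- by rewrite -cu -cv (same_mxtrace hcc).
- by rewrite -/C -cu -cv -{1}ck -ck' (same_mxtrace2 hcc).
- by rewrite -cu -cv (same_det hcc).
Qed.

End Degenerate.

Lemma nilpotent2_sub_scalar (F : fieldType) (X : 'M[F]_2) r :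
  \tr X = r + r -> \det X = r * r -> nilpotent2 (X - r%:M).
Proof.
move=> ht hd; split.
  by rewrite raddfB /= mxtrace_scalar ht mulr2n subrr.
have -> : \det (X - r%:M) = \det X - r * \tr X + r * r.
  by rewrite !det2E !mxtrace2E !mxE /= !mulr1n !mulr0n; ring.
by rewrite hd ht; ring.
Qed.

Lemma double_eigenvalue_inj (F : fieldType) (x y : F) :
  x + x = y + y -> x * x = y * y -> x = y.
Proof.
move=> e1 e2; apply/eqP; rewrite -subr_eq0 -sqrf_eq0.
have -> : (x - y) ^+ 2 = (x * x - y * y) - y * ((x + x) - (y + y)) by ring.
by rewrite e1 e2 !subrr mulr0 subr0.
Qed.

Section ScalarReduction.
Variables (F : fieldType) (d : nat).
Hypothesis hF : infinite_field F.
Notation pt := (pt F d).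
Implicit Types u v w : pt.

Definition scalar_pt (rho : 'I_d -> F) : pt := fun m => (rho m)%:M.

Definition double_eigenvalues u (rho : 'I_d -> F) :=
  forall m, \tr (u m) = rho m + rho m /\ \det (u m) = rho m * rho m.

Lemma same_invariants_scalar_upper w : (forall m, w m 1 0 = 0) ->
  (forall m, w m 1 1 = w m 0 0) ->
  same_invariants w (scalar_pt (fun m => w m 0 0)) /\
  double_eigenvalues w (fun m => w m 0 0).
Proof.
move=> h10 h11; split=> [|m]; last by rewrite mxtrace2E det2E h10 h11; split=> //; ring.
suff <- : diag_part w = scalar_pt (fun m => w m 0 0) by apply: same_invariants_upper.
by apply: functional_extensionality => m; rewrite /diag_part /scalar_pt scalar_mx2E h11.
Qed.

Lemma double_eigenvalues_conj g u rho : g \in unitmx ->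
  double_eigenvalues (conj_pt g u) rho -> double_eigenvalues u rho.
Proof. by move=> hg h m; rewrite -(mxtrace_conj _ hg) -(det_conj _ hg); apply: h. Qed.

(* A nonscalar u k with a double eigenvalue r is conjugate to r + E12, and
   then every coordinate, being in F + F u k, becomes upper triangular with
   equal diagonal entries. *)
Lemma scalar_reduction_nonscalar u k r : ~~ is_scalar_mx (u k) ->
  \tr (u k) = r + r -> \det (u k) = r * r ->
  (forall m, exists a b, u m = a%:M + b *: u k) ->
  exists rho, same_invariants u (scalar_pt rho) /\ double_eigenvalues u rho.
Proof.
move=> hk htr hdt hspan; pose N := u k - r%:M.
have N0 : N != 0.
  by apply: contraNneq hk => /subr0_eq uk; apply/is_scalar_mxP; exists r.
have [g hg eg] := conj_nilpotent (nilpotent2_sub_scalar htr hdt) N0.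
have egk : mxconj g (u k) = r%:M + 1 *: E12 F.
  rewrite -[u k](subrK r%:M) -/N addrC -[N]scale1r mxconj_scalar_comb //.
  by rewrite (mxconj_intertwine hg eg).
have hw m : exists a b, conj_pt g u m = a%:M + b *: (r%:M + 1 *: E12 F).
  rewrite conj_ptE; have [a [b ->]] := hspan m.
  by exists a, b; rewrite mxconj_scalar_comb // egk.
have h10 m : conj_pt g u m 1 0 = 0.
  by have [a [b ->]] := hw m; rewrite !scalar_comb2E /E12 !mx2E; ring.
have h11 m : conj_pt g u m 1 1 = conj_pt g u m 0 0.
  by have [a [b ->]] := hw m; rewrite !scalar_comb2E /E12 !mx2E.
have [hsi hde] := same_invariants_scalar_upper h10 h11.
exists (fun m => conj_pt g u m 0 0); split.
  exact: same_invariants_trans (same_invariants_conj u hg) hsi.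
exact: double_eigenvalues_conj hg hde.
Qed.

Lemma scalar_reduction u : ~ has_distinct_comb u -> ~ has_pivot u ->
  (forall m, exists r, r ^+ 2 - \tr (u m) * r + \det (u m) = 0) ->
  exists rho, same_invariants u (scalar_pt rho) /\ double_eigenvalues u rho.
Proof.
move=> hd hp hr.
have hrho m : exists r, \tr (u m) = r + r /\ \det (u m) = r * r.
  have [r hr'] := hr m; exists r; apply: double_root hr' => h.
  by apply: hd; exists [:: (1, Some m)]; rewrite comb_coord.
have [hs | /forallPn [k hk]] := boolP [forall m, is_scalar_mx (u m)]; last first.
  have [r [htr hdt]] := hrho k.
  exact: scalar_reduction_nonscalar hk htr hdt (fun m => comb_span m hd hp hk).
have us m : u m = (u m 0 0)%:M.
  by have /is_scalar_mxP [a ->] := forallP hs m; rewrite mxE eqxx.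
exists (fun m => u m 0 0); split.
  suff {1}-> : u = scalar_pt (fun m => u m 0 0) by apply: same_invariants_refl.
  exact: functional_extensionality.
move=> m; move: (us m); set c := u m 0 0 => ->.
by rewrite scalar_mx2E mxtrace2E det2E !mx2E; split=> //; ring.
Qed.

Lemma same_invariants_degenerate u v : same_trace_data u v ->
  ~ has_distinct_comb u -> ~ has_pivot u -> same_invariants u v.
Proof.
move=> huv hd hp.
have [[k hk]|hroots] :=
  classic (exists k, forall r, r ^+ 2 - \tr (u k) * r + \det (u k) != 0).
  exact: same_invariants_companion huv hd hp hk.
have hr w m : \tr (w m) = \tr (u m) -> \det (w m) = \det (u m) ->
    exists r, r ^+ 2 - \tr (w m) * r + \det (w m) = 0.
  move=> -> ->; apply: NNPP => hm; apply: hroots; exists m => r.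
  by apply/eqP => e; apply: hm; exists r.
have [rho [ur hur]] := scalar_reduction hd hp (fun m => hr u m erefl erefl).
have [rho' [vr hvr]] := scalar_reduction (fun h => hd (has_distinct_comb_data huv h))
  (fun h => hp (has_pivot_data huv h))
  (fun m => hr v m (esym (same_mxtrace huv m)) (esym (same_det huv m))).
suff e : rho = rho'.
  by apply: same_invariants_trans ur _; rewrite e; apply: same_invariants_sym.
apply: functional_extensionality => m; apply: double_eigenvalue_inj.
  by rewrite -(hur m).1 -(hvr m).1 (same_mxtrace huv).
by rewrite -(hur m).2 -(hvr m).2 (same_det huv).
Qed.

Theorem same_trace_data_same_invariants u v : same_trace_data u v -> same_invariants u v.
Proof.
move=> huv.
have [[s hs]|hd] := classic (has_distinct_comb u).
  exact: same_invariants_distinct huv hs.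
have [[s [l [hN hl]]]|hp] := classic (has_pivot u).
  exact: same_invariants_pivot huv hN hl.
exact: same_invariants_degenerate huv hd hp.
Qed.

End ScalarReduction.

Section Separating.
Variables (F : fieldType) (d : nat).
Notation pt := (pt F d).
Implicit Types (u v : pt) (f g : pt -> F).

Lemma Sd_invariant f : Sd f -> invariant f.
Proof.
have conj_tr3 (g X Y Z : 'M[F]_2) : g \in unitmx ->
    \tr (mxconj g X *m mxconj g Y *m mxconj g Z) = \tr (X *m Y *m Z).
  by move=> hg; rewrite !mxconjM // mxtrace_conj.
case=> [[i ->]|[[i ->]|[[i [j [_ ->]]]|[i [j [k [_ [_ ->]]]]]]]]; split.
- exact/polyfun_mxtrace/polyfun_mx_coord.
- by move=> g hg A; rewrite conj_ptE mxtrace_conj.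
- exact/polyfun_det/polyfun_mx_coord.
- by move=> g hg A; rewrite conj_ptE det_conj.
- by apply/polyfun_mxtrace/polyfun_mxM; apply: polyfun_mx_coord.
- by move=> g hg A; rewrite !conj_ptE mxconjM // mxtrace_conj.
- by apply/polyfun_mxtrace/polyfun_mxM; [apply: polyfun_mxM|]; apply: polyfun_mx_coord.
- by move=> g hg A; rewrite !conj_ptE conj_tr3.
Qed.

Lemma Sd_separating : infinite_field F -> separating (@Sd F d).
Proof.
move=> hF; split=> [|u v [f [hf huv]]]; first exact: Sd_invariant.
apply: NNPP => hS; apply: huv; apply: (same_trace_data_same_invariants hF) hf.
by apply: same_Sd_trace_data => g hg; apply: NNPP => h; apply: hS; exists g.
Qed.

End Separating.

Section Minimal.
Variables (F : fieldType) (d : nat).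
Notation pt := (pt F d).
Implicit Types (u v : pt) (f g : pt -> F) (A : pred 'I_d).

Definition Sd_within A f :=
  [\/ exists2 i, A i & f = (fun X => \tr (X i)),
      exists2 i, A i & f = (fun X => \det (X i)),
      exists i j, [/\ A i, A j, (i < j)%N & f = (fun X => \tr (X i *m X j))] |
      exists i j k, [/\ A i, A j, A k, (i < j < k)%N &
        f = (fun X => \tr (X i *m X j *m X k))]].

Lemma Sd_within_separating u v A g : (forall m, ~~ A m -> u m = 0 /\ v m = 0) ->
  Sd g -> g u <> g v -> Sd_within A g.
Proof.
move=> zero; case=> [[a ->]|[[a ->]|[[a [b [ab ->]]]|[a [b [c [ab [bc ->]]]]]]]] /=.
- have [Aa|/zero [-> ->]] := boolP (A a); last by rewrite mxtrace0 => /(_ erefl).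
  by move=> _; apply: Or41; exists a.
- have [Aa|/zero [-> ->]] := boolP (A a); last by rewrite det0 => /(_ erefl).
  by move=> _; apply: Or42; exists a.
- have [Aa|/zero [-> ->]] := boolP (A a); last by rewrite !mul0mx mxtrace0 => /(_ erefl).
  have [Ab|/zero [-> ->]] := boolP (A b); last by rewrite !mulmx0 mxtrace0 => /(_ erefl).
  by move=> _; apply: Or43; exists a, b.
- have [Aa|/zero [-> ->]] := boolP (A a); last by rewrite !mul0mx mxtrace0 => /(_ erefl).
  have [Ab|/zero [-> ->]] := boolP (A b).
    have [Ac|/zero [-> ->]] := boolP (A c); last by rewrite !mulmx0 mxtrace0 => /(_ erefl).
    by move=> _; apply: Or44; exists a, b, c; rewrite ab bc.
  by rewrite !mulmx0 !mul0mx mxtrace0 => /(_ erefl).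
Qed.

Definition Sd_sole_separator f :=
  exists u v, f u <> f v /\ forall g, Sd g -> g u <> g v -> g = f.

Lemma Sd_sole_separator_within u v A f : f u <> f v ->
  (forall m, ~~ A m -> u m = 0 /\ v m = 0) ->
  (forall g, Sd_within A g -> g u <> g v -> g = f) -> Sd_sole_separator f.
Proof.
move=> huv zero h; exists u, v; split=> // g hg hne.
exact: h (Sd_within_separating zero hg hne) hne.
Qed.

Definition pt3 (i j k : 'I_d) (X Y Z : 'M[F]_2) : pt :=
  fun m => if m == i then X else if m == j then Y else if m == k then Z else 0.

Definition in3 (i j k m : 'I_d) := [|| m == i, m == j | m == k].

Lemma pt3_out i j k X Y Z m : ~~ in3 i j k m -> pt3 i j k X Y Z m = 0.
Proof. by rewrite /pt3 /in3 !negb_or => /and3P [/negbTE -> /negbTE -> /negbTE ->]. Qed.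

Let pt0 : pt := fun=> 0.

Ltac in3_cases := repeat match goal with
  | H : is_true (in3 _ _ _ ?x) |- _ => move: H; rewrite /in3 => /or3P [] /eqP ?; subst x
  end.

Lemma Sd_sole_separator_tr i : Sd_sole_separator (fun X => \tr (X i)).
Proof.
apply: (@Sd_sole_separator_within (pt3 i i i (mx2 1 0 0 0) 0 0) pt0 (in3 i i i)).
- by rewrite /pt3 /pt0 eqxx mxtrace0 mxtrace2E !mx2E addr0; apply/eqP; rewrite oner_eq0.
- by move=> m /pt3_out ->.
move=> g [[a Aa ->]|[a Aa ->]|[a [b [Aa Ab ab ->]]]|[a [b [c [Aa Ab Ac abc ->]]]]];
  in3_cases; try done; try by exfalso; lia.
all: by move=> hne; case: hne; rewrite /pt3 /pt0 eqxx det0 det2E !mx2E; ring.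
Qed.

Lemma Sd_sole_separator_det i : Sd_sole_separator (fun X => \det (X i)).
Proof.
apply: (@Sd_sole_separator_within (pt3 i i i (mx2 0 1 (-1) 0) 0 0) pt0 (in3 i i i)).
- rewrite /pt3 /pt0 eqxx det0 det2E !mx2E; apply/eqP.
  by rewrite mulr0 mul1r sub0r opprK oner_eq0.
- by move=> m /pt3_out ->.
move=> g [[a Aa ->]|[a Aa ->]|[a [b [Aa Ab ab ->]]]|[a [b [c [Aa Ab Ac abc ->]]]]];
  in3_cases; try done; try by exfalso; lia.
all: by move=> hne; case: hne; rewrite /pt3 /pt0 eqxx mxtrace0 mxtrace2E !mx2E addr0.
Qed.

Lemma Sd_sole_separator_tr2 (i j : 'I_d) : (i < j)%N ->
  Sd_sole_separator (fun X => \tr (X i *m X j)).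
Proof.
move=> ij; have ji : (j == i) = false by apply/negbTE; rewrite eq_sym neq_ltn ij.
apply: (@Sd_sole_separator_within (pt3 i j j (E12 F) (mx2 0 0 1 0) 0) pt0 (in3 i j j)).
- rewrite /pt3 /pt0 !eqxx ji mul0mx mxtrace0 mxtrace2E !mx2E; apply/eqP.
  by rewrite !(mul0r, mulr0, mulr1, add0r, addr0) oner_eq0.
- by move=> m /pt3_out ->.
move=> g [[a Aa ->]|[a Aa ->]|[a [b [Aa Ab ab ->]]]|[a [b [c [Aa Ab Ac abc ->]]]]];
  in3_cases; try done; try by exfalso; lia.
all: move=> hne; case: hne; rewrite /pt3 /pt0 ?eqxx ?ji ?mxtrace0 ?det0 /E12.
all: by rewrite ?mxtrace2E ?det2E !mx2E; ring.
Qed.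

(* Transposing every coordinate preserves traces, determinants and traces of
   products of two matrices, but reverses the order in products of three. *)
Lemma Sd_sole_separator_tr3 (i j k : 'I_d) : (i < j < k)%N ->
  Sd_sole_separator (fun X => \tr (X i *m X j *m X k)).
Proof.
move=> /andP [ij jk].
have ji : (j == i) = false by apply/negbTE; rewrite eq_sym neq_ltn ij.
have ki : (k == i) = false by apply/negbTE; rewrite eq_sym neq_ltn (ltn_trans ij jk).
have kj : (k == j) = false by apply/negbTE; rewrite eq_sym neq_ltn jk.
pose u := pt3 i j k (E12 F) (mx2 0 0 1 0) (mx2 1 0 0 0).
apply: (@Sd_sole_separator_within u (fun m => (u m)^T) (in3 i j k)).
- rewrite /u /pt3 !eqxx ji ki kj /E12 !trmx_mx2 !mxtrace2E !mulmx2E !mx2E; apply/eqP.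
  by rewrite !(mul0r, mulr0, mulr1, add0r, addr0) oner_eq0.
- move=> m /(pt3_out (E12 F) (mx2 0 0 1 0) (mx2 1 0 0 0)).
  by rewrite /u => ->; rewrite trmx0.
move=> g [[a Aa ->]|[a Aa ->]|[a [b [Aa Ab ab ->]]]|[a [b [c [Aa Ab Ac abc ->]]]]] /=.
- by rewrite mxtrace_tr.
- by rewrite det_tr.
- by rewrite -trmx_mul mxtrace_tr mxtrace_mulC.
by in3_cases; move: abc => /andP [? ?]; try done; exfalso; lia.
Qed.

Lemma Sd_sole_separator_mem f : Sd f -> Sd_sole_separator f.
Proof.
case=> [[i ->]|[[i ->]|[[i [j [ij ->]]]|[i [j [k [ij [jk ->]]]]]]]].
- exact: Sd_sole_separator_tr.
- exact: Sd_sole_separator_det.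
- exact: Sd_sole_separator_tr2.
- by apply: Sd_sole_separator_tr3; rewrite ij jk.
Qed.

End Minimal.

Theorem lemma2 (F : fieldType) (d : nat) (hF : infinite_field F)
  (hd1 : (1 <= d)%N) (hd3 : (d <= 3)%N) :
  minimal_separating (@Sd F d).
Proof.
split=> [|T TS [_ T_sep] f hf]; first exact: Sd_separating.
have [u [v [huv huniq]]] := Sd_sole_separator_mem hf.
have [g [Tg hg]] := T_sep u v (ex_intro _ f (conj (Sd_invariant hf) huv)).
by rewrite -(huniq g (TS g Tg) hg).
Qed.
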